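(* Let $L>0$ and $\delta\in\mathbb{R}$. The Korteweg–de Vries equation $$u_t+uu_x+\delta^2u_{xxx}=0$$ subject to $L$-periodic boundary conditions does not possess the finitely many determining modes property in $L^2$. That is, there is no positive integer $M$ such that for any two solutions $u_1,u_2$ (with mean-zero $L$-periodic initial data in $H^2_{\mathrm{per}}$), $\lim_{t\to\infty}\|P_M(u_1(t)-u_2(t))\|_{L^2}=0$ implies $\lim_{t\to\infty}\|u_1(t)-u_2(t)\|_{L^2}=0$.
   Context: $H^2_{\mathrm{per}}$ denotes the closure of the $L$-periodic trigonometric polynomials on $\mathbb{R}$ in the $H^2$ norm over one period; $L^2$ norms are over $[0,L]$. For a positive integer $M$, $P_M$ is the orthogonal projection onto the lowest $M$ Fourier modes (the span of $e^{i\frac{2\pi}{L}nx}$, $|n|\le M$). The equation is understood to be globally well-posed with unique solutions for such data. *)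

From Stdlib Require Import Reals ZArith.
From Coquelicot Require Import Coquelicot.
Open Scope R_scope.

(* An L-periodic function is represented by its Fourier coefficients
   c : Z -> C w.r.t. the basis e^{i (2 pi / L) n x}:
      u(x) = sum_{n in Z} c n * e^{i (2 pi / L) n x}. *)
Definition state := Z -> C.

Definition sumZ (f : Z -> R) : R :=
  Series (fun j : nat => f (Z.of_nat j)) +
  Series (fun j : nat => f (- Z.of_nat (S j))%Z).

Definition summableZ (f : Z -> R) : Prop :=
  ex_series (fun j : nat => Rabs (f (Z.of_nat j))) /\
  ex_series (fun j : nat => Rabs (f (- Z.of_nat (S j))%Z)).

Definition state_sub (c d : state) : state := fun n => Cminus (c n) (d n).

Definition real_state (c : state) : Prop := forall n, c (- n)%Z = Cconj (c n).

Definition mean_zero (c : state) : Prop := c 0%Z = 0%C.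

Definition H2_weight (n : Z) : R := (1 + IZR n ^ 2) ^ 2.

Definition in_H2 (c : state) : Prop :=
  summableZ (fun n => H2_weight n * Cmod (c n) ^ 2).

Definition H2_norm_sq (c : state) : R :=
  sumZ (fun n => H2_weight n * Cmod (c n) ^ 2).

(* L^2([0,L]) norm of u = sum c_n e^{i 2pi n x / L}  (Parseval) *)
Definition L2_norm (L : R) (c : state) : R :=
  sqrt (L * sumZ (fun n => Cmod (c n) ^ 2)).

Definition P (M : nat) (c : state) : state :=
  fun n => if (Z.abs n <=? Z.of_nat M)%Z then c n else 0%C.

(* Fourier coefficient n of u^2 : sum_m c_m c_{n-m} *)
Definition conv (c : state) (n : Z) : C :=
  (sumZ (fun m => Re (Cmult (c m) (c (n - m)%Z))),
   sumZ (fun m => Im (Cmult (c m) (c (n - m)%Z)))).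

(* Fourier coefficient n of  -(u u_x) - delta^2 u_xxx, with k = 2 pi / L:
     -(i k n / 2) (u^2)^_n + i delta^2 k^3 n^3 c_n                      *)
Definition kdv_rhs (L delta : R) (c : state) (n : Z) : C :=
  let k := 2 * PI / L in
  Cplus (Cmult (0, - (k * IZR n / 2)) (conv c n))
        (Cmult (0, delta ^ 2 * k ^ 3 * IZR n ^ 3) (c n)).

Definition is_kdv_solution (L delta : R) (u : R -> state) : Prop :=
  (forall t, 0 <= t -> real_state (u t) /\ in_H2 (u t)) /\
  (forall t, 0 <= t -> forall eps, 0 < eps -> exists d, 0 < d /\
     forall s, 0 <= s -> Rabs (s - t) < d ->
       H2_norm_sq (state_sub (u s) (u t)) < eps) /\
  (forall (n : Z) t, 0 < t ->
     is_derive (fun s => u s n) t (kdv_rhs L delta (u t) n)).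

Definition admissible_data (c : state) : Prop :=
  real_state c /\ mean_zero c /\ in_H2 c.

Definition globally_well_posed (L delta : R) : Prop :=
  forall c0, admissible_data c0 ->
    (exists u, is_kdv_solution L delta u /\ u 0 = c0) /\
    (forall u v, is_kdv_solution L delta u -> is_kdv_solution L delta v ->
       u 0 = c0 -> v 0 = c0 -> forall t, 0 <= t -> u t = v t).

Definition determining_modes (L delta : R) (M : nat) : Prop :=
  forall u1 u2 : R -> state,
    is_kdv_solution L delta u1 -> is_kdv_solution L delta u2 ->
    admissible_data (u1 0) -> admissible_data (u2 0) ->
    is_lim (fun t => L2_norm L (P M (state_sub (u1 t) (u2 t)))) p_infty 0 ->
    is_lim (fun t => L2_norm L (state_sub (u1 t) (u2 t))) p_infty 0.

From Stdlib Require Import Reals ZArith Lra Lia List FunctionalExtensionality.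
From Coquelicot Require Import Coquelicot.
Open Scope R_scope.

(* Take N = M + 1 and the datum cos (2 pi N x / L), whose only Fourier coefficients are 1 at
   n = +-N.  Spatial translation by L / N maps solutions to solutions and fixes this datum, so by
   uniqueness the solution u(t) is invariant under it, which forces the modes 0 < |n| < N to vanish;
   the mean is conserved, hence zero.  So P_M u(t) = 0 = P_M 0 for all t, whereas the L^2 norm of
   u(t) is conserved and positive, so u(t) does not approach the zero solution.
   The L^2 norm is conserved because the time derivative of sum_{|n| <= K} |u_n|^2 is a nonlinear
   flux whose part coming from the modes |n| <= K cancels exactly (a discrete form of
   int u^2 u_x = 0), while the rest is O(1/K) on bounded sets of H^2. *)

Fixpoint lsum {A : Type} (f : A -> R) (l : list A) : R :=
  match l with nil => 0 | x :: l => f x + lsum f l end.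

Section ListSums.
Context {A : Type}.
Implicit Types (f g : A -> R) (l : list A).

Lemma lsum_app f l1 l2 : lsum f (l1 ++ l2) = lsum f l1 + lsum f l2.
Proof. induction l1 as [|x l1 IH]; simpl; [lra | rewrite IH; lra]. Qed.

Lemma lsum_ext f g l : (forall x, In x l -> f x = g x) -> lsum f l = lsum g l.
Proof.
  induction l as [|x l IH]; simpl; intros H; [reflexivity|].
  rewrite H, IH; auto.
Qed.

Lemma lsum_plus f g l : lsum (fun x => f x + g x) l = lsum f l + lsum g l.
Proof. induction l as [|x l IH]; simpl; [lra | rewrite IH; lra]. Qed.

Lemma lsum_minus f g l : lsum (fun x => f x - g x) l = lsum f l - lsum g l.
Proof. induction l as [|x l IH]; simpl; [lra | rewrite IH; lra]. Qed.

Lemma lsum_scal c f l : lsum (fun x => c * f x) l = c * lsum f l.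
Proof. induction l as [|x l IH]; simpl; [lra | rewrite IH; lra]. Qed.

Lemma lsum_map {B : Type} f (h : B -> A) (l : list B) :
  lsum f (map h l) = lsum (fun x => f (h x)) l.
Proof. induction l as [|x l IH]; simpl; [reflexivity | now rewrite IH]. Qed.

Lemma lsum_rev f l : lsum f (rev l) = lsum f l.
Proof. induction l as [|x l IH]; simpl; [reflexivity|]. rewrite lsum_app, IH; simpl; lra. Qed.

Lemma lsum_eq0 f l : (forall x, In x l -> f x = 0) -> lsum f l = 0.
Proof. intros H. rewrite (lsum_ext f (fun _ => 0)) by auto. clear H. induction l; simpl; lra. Qed.

Lemma lsum_le f g l : (forall x, In x l -> f x <= g x) -> lsum f l <= lsum g l.
Proof.
  induction l as [|x l IH]; simpl; intros H; [lra|].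
  pose proof (H x (or_introl eq_refl)). pose proof (IH (fun y hy => H y (or_intror hy))). lra.
Qed.

Lemma Rabs_lsum_le f l : Rabs (lsum f l) <= lsum (fun x => Rabs (f x)) l.
Proof.
  induction l as [|x l IH]; simpl; [rewrite Rabs_R0; lra|].
  eapply Rle_trans; [apply Rabs_triang | lra].
Qed.

Lemma lsum_nonneg f l : (forall x, In x l -> 0 <= f x) -> 0 <= lsum f l.
Proof. intros H. rewrite <- (lsum_eq0 (fun _ => 0) l) by auto. now apply lsum_le. Qed.

Lemma lsum_term_le f l x : In x l -> (forall y, In y l -> 0 <= f y) -> f x <= lsum f l.
Proof.
  induction l as [|y l IH]; simpl; intros Hx H; [tauto|].
  pose proof (lsum_nonneg f l (fun z hz => H z (or_intror hz))).
  pose proof (H y (or_introl eq_refl)).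
  destruct Hx as [<- | Hx]; [lra|].
  pose proof (IH Hx (fun z hz => H z (or_intror hz))). lra.
Qed.

End ListSums.

Lemma lsum_comm {A B : Type} (g : A -> B -> R) (l : list A) (l' : list B) :
  lsum (fun x => lsum (g x) l') l = lsum (fun y => lsum (fun x => g x y) l) l'.
Proof.
  induction l as [|x l IH]; simpl; [symmetry; apply lsum_eq0; auto|].
  rewrite IH, <- lsum_plus. reflexivity.
Qed.

Fixpoint Zrange (a : Z) (n : nat) : list Z :=
  match n with O => nil | S n => a :: Zrange (a + 1) n end.

Lemma In_Zrange a n x : In x (Zrange a n) <-> (a <= x < a + Z.of_nat n)%Z.
Proof. revert a; induction n as [|n IH]; intros a; simpl; [lia | rewrite IH; lia]. Qed.

Lemma Zrange_add a n m : Zrange a (n + m) = Zrange a n ++ Zrange (a + Z.of_nat n) m.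
Proof.
  revert a; induction n as [|n IH]; intros a; simpl; [f_equal; lia|].
  rewrite IH. do 3 f_equal. lia.
Qed.

Lemma map_sub_Zrange s a n :
  map (fun m => s - m)%Z (Zrange a n) = rev (Zrange (s - a - Z.of_nat n + 1) n).
Proof.
  revert a; induction n as [|n IH]; intros a; [reflexivity|].
  replace (Zrange (s - a - Z.of_nat (S n) + 1) (S n))
    with (Zrange (s - a - Z.of_nat (S n) + 1) (n + 1)) by (f_equal; lia).
  rewrite Zrange_add, rev_app_distr. cbn [Zrange map rev app]. rewrite IH.
  f_equal; [lia | do 3 f_equal; lia].
Qed.

Lemma lsum_Zrange_sub f a n b m : (a <= b)%Z -> (b + Z.of_nat m <= a + Z.of_nat n)%Z ->
  (forall x, In x (Zrange a n) -> ~ In x (Zrange b m) -> f x = 0) ->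
  lsum f (Zrange a n) = lsum f (Zrange b m).
Proof.
  intros Hab Hmn Hf. set (p := Z.to_nat (b - a)).
  replace n with (p + (m + (n - p - m)))%nat by (unfold p; lia).
  rewrite !Zrange_add, !lsum_app. replace (a + Z.of_nat p)%Z with b by (unfold p; lia).
  rewrite (lsum_eq0 f (Zrange a p)), (lsum_eq0 f (Zrange _ (n - p - m))); [lra | |];
    intros x Hx; apply Hf; rewrite ?In_Zrange in *; lia.
Qed.

Definition Zball (N : nat) : list Z := Zrange (- Z.of_nat N) (2 * N + 1).

Lemma In_Zball N x : In x (Zball N) <-> (Z.abs x <= Z.of_nat N)%Z.
Proof. unfold Zball; rewrite In_Zrange; lia. Qed.

Lemma lsum_Zball_reflect f N s :
  lsum f (Zball N) = lsum (fun m => f (s - m)%Z) (Zrange (s - Z.of_nat N) (2 * N + 1)).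
Proof.
  rewrite <- (lsum_map f (fun m => s - m)%Z), map_sub_Zrange, lsum_rev.
  unfold Zball. do 2 f_equal. lia.
Qed.

Lemma lsum_Zball_opp f N : lsum f (Zball N) = lsum (fun x => f (- x)%Z) (Zball N).
Proof.
  rewrite (lsum_Zball_reflect f N 0). replace (0 - Z.of_nat N)%Z with (- Z.of_nat N)%Z by lia.
  apply lsum_ext; intros; f_equal; lia.
Qed.

Lemma lsum_Zball_reflect_supp (phi : Z -> R) N n : (Z.abs n <= Z.of_nat N)%Z ->
  (forall m, phi m <> 0 -> (Z.abs m <= Z.of_nat N)%Z /\ (Z.abs (n - m) <= Z.of_nat N)%Z) ->
  lsum phi (Zball N) = lsum (fun m => phi (n - m)%Z) (Zball N).
Proof.
  intros Hn Hphi. rewrite (lsum_Zball_reflect phi N n).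
  assert (Hout : forall m, (Z.of_nat N < Z.abs m \/ Z.of_nat N < Z.abs (n - m))%Z -> phi (n - m)%Z = 0).
  { intros m Hm. destruct (Req_dec (phi (n - m)%Z) 0) as [|Hne]; auto.
    apply Hphi in Hne. replace (n - (n - m))%Z with m in Hne by lia. lia. }
  transitivity (lsum (fun m => phi (n - m)%Z) (Zrange (- 2 * Z.of_nat N) (4 * N + 1))).
  - symmetry. apply lsum_Zrange_sub; try lia.
    intros m _ Hm. rewrite In_Zrange in Hm. apply Hout. lia.
  - apply lsum_Zrange_sub; try lia.
    intros m _ Hm. rewrite In_Zrange in Hm. apply Hout. lia.
Qed.

Definition triad (d : state) (n m : Z) : R := Im (Cmult (Cconj (d n)) (Cmult (d m) (d (n - m)%Z))).

Lemma triad_sub d n m : triad d n (n - m)%Z = triad d n m.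
Proof.
  unfold triad. replace (n - (n - m))%Z with m by lia.
  destruct (d m), (d n), (d (n - m)%Z); simpl; ring.
Qed.

Lemma triad_opp d n m : real_state d -> triad d (- m)%Z (- n)%Z = triad d n m.
Proof.
  intros Hd. unfold triad. replace (- m - - n)%Z with (n - m)%Z by lia.
  rewrite (Hd m), (Hd n). destruct (d m), (d n), (d (n - m)%Z); simpl; ring.
Qed.

Lemma triad_support (d : state) N n m : (forall j, (Z.of_nat N < Z.abs j)%Z -> d j = 0%C) ->
  triad d n m <> 0 -> (Z.abs m <= Z.of_nat N)%Z /\ (Z.abs (n - m) <= Z.of_nat N)%Z.
Proof.
  intros Hd Ht. unfold triad in Ht.
  split; apply Z.nlt_ge; intros Hj; apply Ht; rewrite (Hd _ Hj);
    unfold Im, Cconj, Cmult; simpl; ring.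
Qed.

(* Discrete form of [int u^2 u_x = 0]: for the sum Q on the left and Q' the same sum with weight
   [m] instead of [n], the symmetry (n,m) -> (-m,-n) gives Q = -Q' and m -> n - m gives Q = 2 Q'. *)
Lemma sum_triad_eq0 (d : state) N : real_state d -> (forall j, (Z.of_nat N < Z.abs j)%Z -> d j = 0%C) ->
  lsum (fun n => IZR n * lsum (triad d n) (Zball N)) (Zball N) = 0.
Proof.
  intros Hr Hs.
  set (Q := lsum (fun n => IZR n * lsum (triad d n) (Zball N)) (Zball N)).
  set (Q' := lsum (fun n => lsum (fun m => IZR m * triad d n m) (Zball N)) (Zball N)).
  assert (HQ : Q = - Q').
  { transitivity (lsum (fun n => lsum (fun m => IZR n * triad d (- m) (- n)) (Zball N)) (Zball N)).
    { apply lsum_ext; intros n _. rewrite <- lsum_scal. apply lsum_ext; intros m _.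
      now rewrite triad_opp. }
    rewrite lsum_comm, lsum_Zball_opp.
    replace (- Q') with (-1 * Q') by ring. unfold Q'. rewrite <- lsum_scal.
    apply lsum_ext; intros m _. rewrite lsum_Zball_opp, <- lsum_scal.
    apply lsum_ext; intros n _. rewrite !Z.opp_involutive, opp_IZR. ring. }
  assert (HQ' : Q = 2 * Q').
  { unfold Q, Q'. rewrite <- lsum_scal. apply lsum_ext; intros n Hn. apply In_Zball in Hn.
    set (X := lsum (fun m => IZR m * triad d n m) (Zball N)).
    assert (HX : X = lsum (fun m => (IZR n - IZR m) * triad d n m) (Zball N)).
    { unfold X. rewrite (lsum_Zball_reflect_supp (fun m => IZR m * triad d n m) N n Hn).
      - apply lsum_ext; intros m _. now rewrite triad_sub, minus_IZR.
      - intros m Hm. apply (triad_support d N n m Hs). intros Ht; apply Hm; rewrite Ht; ring. }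
    replace (2 * X) with (X + X) by ring. rewrite HX at 1. unfold X.
    rewrite <- lsum_scal, <- lsum_plus. apply lsum_ext; intros m _. ring. }
  lra.
Qed.

Definition seqZ_nonneg (f : Z -> R) (j : nat) : R := f (Z.of_nat j).
Definition seqZ_neg (f : Z -> R) (j : nat) : R := f (- Z.of_nat (S j))%Z.

Lemma is_series_finite (a : nat -> R) N : (forall j, (N < j)%nat -> a j = 0) -> is_series a (sum_n a N).
Proof.
  intros Ha. change (is_lim_seq (sum_n a) (sum_n a N)).
  eapply is_lim_seq_ext_loc; [| apply is_lim_seq_const].
  exists N. intros n Hn. induction Hn as [|n Hn IH]; [reflexivity|].
  rewrite sum_Sn, <- IH, Ha by lia. unfold plus; simpl. symmetry; apply Rplus_0_r.
Qed.

Lemma ex_series_Rabs_plus (a b : nat -> R) :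
  ex_series (fun j => Rabs (a j)) -> ex_series (fun j => Rabs (b j)) ->
  ex_series (fun j => Rabs (a j + b j)).
Proof.
  intros Ha Hb. eapply (@ex_series_le R_AbsRing R_CompleteNormedModule); [| exact (ex_series_plus _ _ Ha Hb)].
  intros j. unfold norm; simpl. rewrite Rabs_Rabsolu. apply Rabs_triang.
Qed.

Lemma ex_series_Rabs_scal c (a : nat -> R) :
  ex_series (fun j => Rabs (a j)) -> ex_series (fun j => Rabs (c * a j)).
Proof.
  intros Ha. eapply ex_series_ext; [| apply (ex_series_scal_l (Rabs c) _ Ha)].
  intros j. symmetry. apply Rabs_mult.
Qed.

Lemma summableZ_ex_series f : summableZ f -> ex_series (seqZ_nonneg f) /\ ex_series (seqZ_neg f).
Proof. intros [H1 H2]. split; apply ex_series_Rabs; assumption. Qed.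

Lemma summableZ_le f g : summableZ g -> (forall j, Rabs (f j) <= g j) -> summableZ f.
Proof.
  intros [H1 H2] H.
  split; [eapply (@ex_series_le R_AbsRing R_CompleteNormedModule); [| exact H1]
         | eapply (@ex_series_le R_AbsRing R_CompleteNormedModule); [| exact H2]];
    intros j; unfold norm; simpl; rewrite Rabs_Rabsolu; eapply Rle_trans; try apply H; apply Rle_abs.
Qed.

Lemma summableZ_plus f g : summableZ f -> summableZ g -> summableZ (fun j => f j + g j).
Proof. intros [F1 F2] [G1 G2]. split; now apply ex_series_Rabs_plus. Qed.

Lemma summableZ_scal c f : summableZ f -> summableZ (fun j => c * f j).
Proof. intros [F1 F2]. split; now apply ex_series_Rabs_scal. Qed.

Lemma sumZ_ext f g : (forall j, f j = g j) -> sumZ f = sumZ g.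
Proof. intros H. unfold sumZ. f_equal; apply Series_ext; intros; apply H. Qed.

Lemma sumZ_plus f g : summableZ f -> summableZ g -> sumZ (fun j => f j + g j) = sumZ f + sumZ g.
Proof.
  intros Hf Hg. apply summableZ_ex_series in Hf as [F1 F2]. apply summableZ_ex_series in Hg as [G1 G2].
  change (Series (fun j => seqZ_nonneg f j + seqZ_nonneg g j) + Series (fun j => seqZ_neg f j + seqZ_neg g j)
    = Series (seqZ_nonneg f) + Series (seqZ_neg f) + (Series (seqZ_nonneg g) + Series (seqZ_neg g))).
  rewrite Series_plus, Series_plus by assumption. ring.
Qed.

Lemma sumZ_scal c f : sumZ (fun j => c * f j) = c * sumZ f.
Proof.
  change (Series (fun j => c * seqZ_nonneg f j) + Series (fun j => c * seqZ_neg f j)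
    = c * (Series (seqZ_nonneg f) + Series (seqZ_neg f))).
  rewrite !Series_scal_l. ring.
Qed.

Lemma sumZ_minus f g : summableZ f -> summableZ g -> sumZ (fun j => f j - g j) = sumZ f - sumZ g.
Proof.
  intros Hf Hg. unfold Rminus.
  rewrite (sumZ_ext _ (fun j => f j + -1 * g j)) by (intros; ring).
  rewrite sumZ_plus, sumZ_scal by (auto using summableZ_scal). ring.
Qed.

Lemma Rabs_sumZ_le f g : summableZ g -> (forall j, Rabs (f j) <= g j) -> Rabs (sumZ f) <= sumZ g.
Proof.
  intros Hg H. destruct (summableZ_le f g Hg H) as [F1 F2]. destruct Hg as [G1 G2].
  unfold sumZ. eapply Rle_trans; [apply Rabs_triang|].
  apply Rplus_le_compat; (eapply Rle_trans; [apply Series_Rabs; assumption|]);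
    (apply Series_le; [intros j; split; [apply Rabs_pos | apply H] | apply ex_series_Rabs; assumption]).
Qed.

Lemma lsum_Zrange_sum_n g a n :
  lsum g (Zrange (Z.of_nat a) (S n)) = sum_n (fun j => g (Z.of_nat (a + j))) n.
Proof.
  induction n as [|n IH].
  - rewrite sum_O. simpl. rewrite Nat.add_0_r. ring.
  - replace (S (S n)) with (S n + 1)%nat by lia.
    rewrite Zrange_add, lsum_app, IH, sum_Sn. simpl. unfold plus; simpl.
    rewrite Rplus_0_r. do 2 f_equal. lia.
Qed.

Lemma lsum_Zball_sum_n f K : lsum f (Zball (S K)) = sum_n (seqZ_nonneg f) (S K) + sum_n (seqZ_neg f) K.
Proof.
  unfold Zball. replace (2 * S K + 1)%nat with (S K + S (S K))%nat by lia.
  rewrite Zrange_add, lsum_app, Rplus_comm.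
  replace (- Z.of_nat (S K) + Z.of_nat (S K))%Z with (Z.of_nat 0) by lia.
  rewrite lsum_Zrange_sum_n. f_equal.
  rewrite <- (lsum_rev f), <- (Z.sub_0_l (Z.of_nat (S K))).
  replace (0 - Z.of_nat (S K))%Z with (0 - Z.of_nat 1 - Z.of_nat (S K) + 1)%Z by lia.
  rewrite <- map_sub_Zrange, lsum_map, lsum_Zrange_sum_n.
  apply sum_n_ext. intros j. reflexivity.
Qed.

Lemma is_lim_seq_sumZ f : summableZ f -> is_lim_seq (fun K => lsum f (Zball (S K))) (sumZ f).
Proof.
  intros Hf. apply summableZ_ex_series in Hf as [F1 F2].
  eapply is_lim_seq_ext; [intros K; symmetry; apply lsum_Zball_sum_n|].
  apply is_lim_seq_plus'; [apply (is_lim_seq_incr_1 (sum_n (seqZ_nonneg f)))|]; now apply Series_correct.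
Qed.

Lemma sumZ_finite f K : (forall j, (Z.of_nat (S K) < Z.abs j)%Z -> f j = 0) ->
  summableZ f /\ sumZ f = lsum f (Zball (S K)).
Proof.
  intros H. split; [split|].
  - exists (sum_n (fun j => Rabs (f (Z.of_nat j))) (S K)). apply is_series_finite.
    intros j Hj. rewrite H by lia. apply Rabs_R0.
  - exists (sum_n (fun j => Rabs (f (- Z.of_nat (S j))%Z)) K). apply is_series_finite.
    intros j Hj. rewrite H by lia. apply Rabs_R0.
  - unfold sumZ. rewrite lsum_Zball_sum_n.
    f_equal; apply is_series_unique, is_series_finite; intros j Hj;
      unfold seqZ_nonneg, seqZ_neg; apply H; lia.
Qed.

Lemma summableZ_zero : summableZ (fun _ => 0).
Proof. apply (sumZ_finite _ 0). auto. Qed.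

Lemma sumZ_zero : sumZ (fun _ => 0) = 0.
Proof. rewrite (proj2 (sumZ_finite _ 0 (fun _ _ => eq_refl))). simpl. ring. Qed.

Lemma sumZ_le f g : summableZ g -> (forall j, 0 <= f j <= g j) -> sumZ f <= sumZ g.
Proof.
  intros Hg H. eapply Rle_trans; [apply Rle_abs|]. apply Rabs_sumZ_le; auto.
  intros j; rewrite Rabs_right; [apply H | apply Rle_ge, H].
Qed.

Lemma sumZ_nonneg g : summableZ g -> (forall j, 0 <= g j) -> 0 <= sumZ g.
Proof. intros Hg H. rewrite <- sumZ_zero. apply sumZ_le; auto. intros j; split; [lra | apply H]. Qed.

Lemma lsum_le_sumZ f K : summableZ f -> (forall j, 0 <= f j) -> lsum f (Zball (S K)) <= sumZ f.
Proof.
  intros Hf H. set (g := fun j => if Z_le_gt_dec (Z.abs j) (Z.of_nat (S K)) then f j else 0).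
  destruct (sumZ_finite g K) as [_ Hg].
  { intros j Hj. unfold g. destruct Z_le_gt_dec; [lia | reflexivity]. }
  replace (lsum f (Zball (S K))) with (sumZ g).
  - apply sumZ_le; auto. intros j. unfold g. destruct Z_le_gt_dec; split; auto; lra.
  - rewrite Hg. apply lsum_ext. intros x Hx. apply In_Zball in Hx.
    unfold g. destruct Z_le_gt_dec; [reflexivity | lia].
Qed.

Lemma term_le_sumZ f j : summableZ f -> (forall j, 0 <= f j) -> f j <= sumZ f.
Proof.
  intros Hf H. eapply Rle_trans; [| apply (lsum_le_sumZ f (Z.abs_nat j) Hf H)].
  apply lsum_term_le; auto. apply In_Zball. lia.
Qed.

(** * H^2 estimates and the energy flux *)

Definition inv_sq_weight (n : Z) : R := 2 / (1 + IZR n ^ 2).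

Lemma is_series_telescoping_inv : is_series (fun j => / (INR j + 1) - / (INR j + 2)) 1.
Proof.
  change (is_lim_seq (sum_n (fun j => / (INR j + 1) - / (INR j + 2))) 1).
  apply is_lim_seq_ext with (u := fun n => 1 - / (INR n + 2)).
  { intros n. induction n as [|n IH]; [rewrite sum_O; simpl; field|].
    rewrite sum_Sn, <- IH. unfold plus; cbn -[INR]. rewrite S_INR. pose proof (pos_INR n).
    field; lra. }
  replace (Finite 1) with (Finite (1 - 0)) by (f_equal; ring).
  apply is_lim_seq_minus'; [apply is_lim_seq_const|].
  replace (Finite 0) with (Rbar_inv p_infty) by reflexivity.
  apply is_lim_seq_inv; [| discriminate].
  eapply is_lim_seq_plus; [apply is_lim_seq_INR | apply is_lim_seq_const | reflexivity].
Qed.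

Lemma inv_sq_le_telescoping (x y : R) : 0 <= x -> x <= Rabs y ->
  Rabs (2 / (1 + y ^ 2)) <= 8 * (/ (x + 1) - / (x + 2)).
Proof.
  intros Hx Hy. assert (Hy2 : x ^ 2 <= y ^ 2) by (rewrite <- (pow2_abs y); apply pow_incr; lra).
  rewrite Rabs_right
    by (apply Rle_ge; unfold Rdiv; apply Rmult_le_pos; [lra | apply Rlt_le, Rinv_0_lt_compat; nra]).
  replace (8 * (/ (x + 1) - / (x + 2))) with (8 / ((x + 1) * (x + 2))) by (field; lra).
  apply Rmult_le_reg_r with ((1 + y ^ 2) * ((x + 1) * (x + 2))); [nra|].
  field_simplify; nra.
Qed.

Lemma summableZ_inv_sq_weight : summableZ inv_sq_weight.
Proof.
  assert (Htel : ex_series (fun j => 8 * (/ (INR j + 1) - / (INR j + 2)))).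
  { apply (ex_series_scal_l 8 (fun j => / (INR j + 1) - / (INR j + 2))).
    eexists. apply is_series_telescoping_inv. }
  split; (eapply (@ex_series_le R_AbsRing R_CompleteNormedModule); [| exact Htel]);
    intros j; unfold norm; cbn -[IZR INR Z.of_nat]; rewrite Rabs_Rabsolu;
    apply inv_sq_le_telescoping; try apply pos_INR.
  - rewrite <- INR_IZR_INZ, Rabs_right; [lra | apply Rle_ge, pos_INR].
  - rewrite opp_IZR, <- INR_IZR_INZ, Rabs_Ropp, Rabs_right, S_INR; [lra | apply Rle_ge, pos_INR].
Qed.

Definition inv_sq_weight_sum : R := sumZ inv_sq_weight.

Lemma inv_sq_weight_nonneg n : 0 <= inv_sq_weight n.
Proof. unfold inv_sq_weight, Rdiv. apply Rmult_le_pos; [lra | apply Rlt_le, Rinv_0_lt_compat; nra]. Qed.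

Lemma inv_sq_weight_sum_nonneg : 0 <= inv_sq_weight_sum.
Proof. apply sumZ_nonneg; [apply summableZ_inv_sq_weight | apply inv_sq_weight_nonneg]. Qed.

Lemma H2_weight_ge1 n : 1 <= H2_weight n.
Proof. unfold H2_weight. pose proof (pow2_ge_0 (IZR n)). nra. Qed.

Lemma H2_term_nonneg (c : state) n : 0 <= H2_weight n * Cmod (c n) ^ 2.
Proof. unfold H2_weight. apply Rmult_le_pos; apply pow2_ge_0. Qed.

Lemma H2_norm_sq_nonneg c : in_H2 c -> 0 <= H2_norm_sq c.
Proof. intros H. apply sumZ_nonneg; auto. intros; apply H2_term_nonneg. Qed.

Lemma H2_term_le (c : state) n : in_H2 c -> H2_weight n * Cmod (c n) ^ 2 <= H2_norm_sq c.
Proof. intros H. apply (term_le_sumZ (fun n => H2_weight n * Cmod (c n) ^ 2) n H), H2_term_nonneg. Qed.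

Lemma Cmod_sq_le_H2 (c : state) n : in_H2 c -> Cmod (c n) ^ 2 <= H2_norm_sq c.
Proof.
  intros H. pose proof (H2_term_le c n H). pose proof (H2_weight_ge1 n).
  pose proof (pow2_ge_0 (Cmod (c n))). nra.
Qed.

Lemma summableZ_Cmod_sq (c : state) : in_H2 c -> summableZ (fun n => Cmod (c n) ^ 2).
Proof.
  intros H. apply (summableZ_le _ _ H). intros n. rewrite Rabs_right by (apply Rle_ge, pow2_ge_0).
  pose proof (H2_weight_ge1 n). pose proof (pow2_ge_0 (Cmod (c n))). nra.
Qed.

Lemma im_le_Cmod (z : C) : Rabs (Im z) <= Cmod z.
Proof. eapply Rle_trans; [apply Rmax_r | apply Rmax_Cmod]. Qed.

Lemma Cmod_plus_sq_le (x y : C) : Cmod (Cplus x y) ^ 2 <= 2 * Cmod x ^ 2 + 2 * Cmod y ^ 2.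
Proof.
  pose proof (Cmod_triangle x y). pose proof (Cmod_ge_0 (Cplus x y)).
  pose proof (pow2_ge_0 (Cmod x - Cmod y)).
  assert (Cmod (Cplus x y) ^ 2 <= (Cmod x + Cmod y) ^ 2) by (apply pow_incr; lra). nra.
Qed.

Lemma in_H2_sub a b : in_H2 a -> in_H2 b -> in_H2 (state_sub a b).
Proof.
  intros Ha Hb.
  apply (summableZ_le _ (fun n => 2 * (H2_weight n * Cmod (a n) ^ 2) + 2 * (H2_weight n * Cmod (b n) ^ 2))).
  { apply summableZ_plus; apply summableZ_scal; assumption. }
  intros n. rewrite Rabs_right by apply Rle_ge, H2_term_nonneg.
  pose proof (Cmod_plus_sq_le (a n) (Copp (b n))) as Hn. rewrite Cmod_opp in Hn.
  pose proof (H2_weight_ge1 n). unfold state_sub, Cminus. nra.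
Qed.

Lemma H2_norm_sq_le_sub a b : in_H2 a -> in_H2 b ->
  H2_norm_sq a <= 2 * H2_norm_sq (state_sub a b) + 2 * H2_norm_sq b.
Proof.
  intros Ha Hb. pose proof (in_H2_sub a b Ha Hb) as Hab.
  unfold H2_norm_sq at 2 3. rewrite <- !sumZ_scal, <- sumZ_plus by (apply summableZ_scal; assumption).
  apply sumZ_le; [apply summableZ_plus; apply summableZ_scal; assumption|].
  intros n. split; [apply H2_term_nonneg|].
  replace (a n) with (Cplus (state_sub a b n) (b n))
    by (unfold state_sub; apply injective_projections; simpl; ring).
  pose proof (Cmod_plus_sq_le (state_sub a b n) (b n)). pose proof (H2_weight_ge1 n). nra.
Qed.

Lemma amgm_H2_weight (r s : R) : 0 <= r -> 0 <= s ->
  (1 + r) * s <= / 2 * ((1 + r ^ 2) ^ 2 * s ^ 2 + 2 / (1 + r ^ 2)).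
Proof.
  intros Hr Hs. set (t := 1 + r ^ 2). assert (Ht : 1 <= t) by (unfold t; nra).
  assert (H1 : (1 + r) ^ 2 <= 2 * t) by (unfold t; pose proof (pow2_ge_0 (1 - r)); nra).
  assert (H2 : 0 <= (t * (t * s) - (1 + r)) ^ 2) by apply pow2_ge_0.
  apply Rmult_le_reg_l with (2 * t); [lra|].
  replace (2 * t * (/ 2 * (t ^ 2 * s ^ 2 + 2 / t))) with (t ^ 3 * s ^ 2 + 2) by (field; lra).
  apply Rmult_le_reg_l with t; [lra|]. nra.
Qed.

Definition wcoef (c : state) (j : Z) : R := (1 + Rabs (IZR j)) * Cmod (c j).

Lemma wcoef_nonneg c j : 0 <= wcoef c j.
Proof. unfold wcoef. apply Rmult_le_pos; [pose proof (Rabs_pos (IZR j)); lra | apply Cmod_ge_0]. Qed.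

Lemma Cmod_le_wcoef c j : Cmod (c j) <= wcoef c j.
Proof. unfold wcoef. pose proof (Rabs_pos (IZR j)). pose proof (Cmod_ge_0 (c j)). nra. Qed.

Lemma wcoef_le c j : Rabs (wcoef c j) <= / 2 * (H2_weight j * Cmod (c j) ^ 2 + inv_sq_weight j).
Proof.
  rewrite Rabs_right by apply Rle_ge, wcoef_nonneg. unfold wcoef, H2_weight, inv_sq_weight.
  rewrite <- (pow2_abs (IZR j)). apply amgm_H2_weight; [apply Rabs_pos | apply Cmod_ge_0].
Qed.

Lemma summableZ_wcoef c : in_H2 c -> summableZ (wcoef c).
Proof.
  intros Hc. eapply summableZ_le; [| apply wcoef_le].
  apply summableZ_scal, summableZ_plus; [exact Hc | apply summableZ_inv_sq_weight].
Qed.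

Section H2Ball.
Variables (c : state) (B : R).
Hypotheses (Hc : in_H2 c) (HB : H2_norm_sq c <= B).

Lemma H2_coef_le j : (1 + IZR j ^ 2) * Cmod (c j) <= 1 + B.
Proof.
  pose proof (H2_term_le c j Hc) as Hj. unfold H2_weight in Hj.
  pose proof (Cmod_ge_0 (c j)). pose proof (pow2_ge_0 (IZR j)).
  assert (0 <= (1 + IZR j ^ 2) * Cmod (c j)) by nra. nra.
Qed.

Lemma Cmod_coef_le j : Cmod (c j) <= 1 + B.
Proof. pose proof (H2_coef_le j). pose proof (Cmod_ge_0 (c j)). pose proof (pow2_ge_0 (IZR j)). nra. Qed.

Lemma sumZ_wcoef_le : sumZ (wcoef c) <= / 2 * (B + inv_sq_weight_sum).
Proof.
  eapply Rle_trans; [apply Rle_abs|]. eapply Rle_trans.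
  - apply Rabs_sumZ_le; [| apply wcoef_le].
    apply summableZ_scal, summableZ_plus; [exact Hc | apply summableZ_inv_sq_weight].
  - rewrite sumZ_scal, sumZ_plus by (auto using summableZ_inv_sq_weight).
    fold (H2_norm_sq c). unfold inv_sq_weight_sum. lra.
Qed.

Lemma summableZ_conv_term (pr : C -> R) n : (forall z, Rabs (pr z) <= Cmod z) ->
  summableZ (fun m => pr (Cmult (c m) (c (n - m)%Z))).
Proof.
  intros Hpr. apply (summableZ_le _ (fun m => (1 + B) * wcoef c m)).
  { apply summableZ_scal, summableZ_wcoef, Hc. }
  intros m. eapply Rle_trans; [apply Hpr|]. rewrite Cmod_mult.
  pose proof (Cmod_coef_le (n - m)%Z). pose proof (Cmod_le_wcoef c m).
  pose proof (Cmod_ge_0 (c m)). pose proof (Cmod_ge_0 (c (n - m)%Z)). nra.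
Qed.

Lemma conv_term_tail_le N n m : (Z.of_nat N < Z.abs m \/ Z.of_nat N < Z.abs (n - m))%Z ->
  INR N * (Cmod (c m) * Cmod (c (n - m)%Z)) <= (1 + B) * wcoef c m.
Proof.
  set (a := Cmod (c m)). set (b := Cmod (c (n - m)%Z)).
  assert (Ha : 0 <= a) by apply Cmod_ge_0. assert (Hb : 0 <= b) by apply Cmod_ge_0.
  pose proof (Cmod_le_wcoef c m). pose proof (wcoef_nonneg c m). pose proof (pos_INR N).
  intros [Hm | Hnm].
  - assert (HN : INR N <= Rabs (IZR m)) by (rewrite INR_IZR_INZ, <- abs_IZR; apply IZR_le; lia).
    pose proof (Cmod_coef_le (n - m)%Z) as Hb'. fold b in Hb'.
    replace (INR N * (a * b)) with ((INR N * a) * b) by ring. rewrite Rmult_comm.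
    apply Rmult_le_compat; try lra; [apply Rmult_le_pos; lra|].
    unfold wcoef. fold a. apply Rmult_le_compat_r; lra.
  - assert (HN : INR N * b <= 1 + B).
    { eapply Rle_trans; [| apply (H2_coef_le (n - m)%Z)]. fold b. apply Rmult_le_compat_r; [lra|].
      assert (INR N <= Rabs (IZR (n - m))) by (rewrite INR_IZR_INZ, <- abs_IZR; apply IZR_le; lia).
      pose proof (pow2_abs (IZR (n - m))). pose proof (pow2_ge_0 (Rabs (IZR (n - m)) - 1)). nra. }
    replace (INR N * (a * b)) with ((INR N * b) * a) by ring.
    apply Rmult_le_compat; try lra; [apply Rmult_le_pos; lra | exact H].
Qed.

Lemma conv_term_P_error (pr : C -> R) N n m : (forall z, Rabs (pr z) <= Cmod z) ->
  INR N * Rabs (pr (Cmult (c m) (c (n - m)%Z)) - pr (Cmult (P N c m) (P N c (n - m)%Z)))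
  <= (1 + B) * wcoef c m.
Proof.
  intros Hpr. pose proof (wcoef_nonneg c m). pose proof (H2_norm_sq_nonneg c Hc).
  assert (Hpr0 : forall z, pr (Cmult z 0%C) = 0 /\ pr (Cmult 0%C z) = 0).
  { intros z. split; apply Rabs_eq_0, Rle_antisym; try apply Rabs_pos;
      eapply Rle_trans; try apply Hpr; rewrite Cmod_mult, Cmod_0; lra. }
  assert (Htail : (Z.of_nat N < Z.abs m \/ Z.of_nat N < Z.abs (n - m))%Z ->
    INR N * Rabs (pr (Cmult (c m) (c (n - m)%Z))) <= (1 + B) * wcoef c m).
  { intros Ht. eapply Rle_trans; [| apply (conv_term_tail_le N n m Ht)].
    apply Rmult_le_compat_l; [apply pos_INR|]. rewrite <- Cmod_mult. apply Hpr. }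
  unfold P. destruct (Z.leb_spec (Z.abs m) (Z.of_nat N)), (Z.leb_spec (Z.abs (n - m)) (Z.of_nat N)).
  - rewrite Rminus_diag, Rabs_R0, Rmult_0_r. nra.
  - rewrite (proj1 (Hpr0 _)), Rminus_0_r. apply Htail. lia.
  - rewrite (proj2 (Hpr0 _)), Rminus_0_r. apply Htail. lia.
  - rewrite (proj2 (Hpr0 _)), Rminus_0_r. apply Htail. lia.
Qed.

Lemma conv_P_error (pr : C -> R) K n : (forall z, Rabs (pr z) <= Cmod z) ->
  Rabs (sumZ (fun m => pr (Cmult (c m) (c (n - m)%Z))) -
        lsum (fun m => pr (Cmult (P (S K) c m) (P (S K) c (n - m)%Z))) (Zball (S K)))
  <= (1 + B) / INR (S K) * (/ 2 * (B + inv_sq_weight_sum)).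
Proof.
  intros Hpr. set (N := S K). assert (HN : 0 < INR N) by apply lt_0_INR, Nat.lt_0_succ.
  pose proof (H2_norm_sq_nonneg c Hc).
  destruct (sumZ_finite (fun m => pr (Cmult (P N c m) (P N c (n - m)%Z))) K) as [Hs Heq].
  { intros j Hj. unfold P. destruct (Z.leb_spec (Z.abs j) (Z.of_nat N)); [lia|].
    apply Rabs_eq_0, Rle_antisym; [| apply Rabs_pos].
    eapply Rle_trans; [apply Hpr|]. rewrite Cmod_mult, Cmod_0. lra. }
  fold N in Heq. rewrite <- Heq, <- sumZ_minus by (auto using summableZ_conv_term).
  eapply Rle_trans; [apply (Rabs_sumZ_le _ (fun m => (1 + B) / INR N * wcoef c m))|].
  - apply summableZ_scal, summableZ_wcoef, Hc.
  - intros m. apply Rmult_le_reg_l with (INR N); [exact HN|].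
    replace (INR N * ((1 + B) / INR N * wcoef c m)) with ((1 + B) * wcoef c m) by (field; lra).
    apply conv_term_P_error, Hpr.
  - rewrite sumZ_scal. apply Rmult_le_compat_l; [apply Rdiv_le_0_compat; lra|].
    apply sumZ_wcoef_le.
Qed.

End H2Ball.

Lemma P_real N c : real_state c -> real_state (P N c).
Proof.
  intros Hc j. unfold P. rewrite Z.abs_opp.
  destruct (Z.abs j <=? Z.of_nat N)%Z; [apply Hc | apply injective_projections; simpl; ring].
Qed.

Lemma P_out N c j : (Z.of_nat N < Z.abs j)%Z -> P N c j = 0%C.
Proof. intros Hj. unfold P. destruct (Z.leb_spec (Z.abs j) (Z.of_nat N)); [lia | reflexivity]. Qed.

Lemma P_in N c j : (Z.abs j <= Z.of_nat N)%Z -> P N c j = c j.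
Proof. intros Hj. unfold P. destruct (Z.leb_spec (Z.abs j) (Z.of_nat N)); [reflexivity | lia]. Qed.

Definition flux (N : nat) (c : state) : R :=
  lsum (fun n => IZR n * Im (Cmult (Cconj (c n)) (conv c n))) (Zball N).

Definition conv_P (N : nat) (c : state) (n : Z) : C :=
  (lsum (fun m => Re (Cmult (P N c m) (P N c (n - m)%Z))) (Zball N),
   lsum (fun m => Im (Cmult (P N c m) (P N c (n - m)%Z))) (Zball N)).

Lemma lsum_triad_P N c n : (Z.abs n <= Z.of_nat N)%Z ->
  lsum (triad (P N c) n) (Zball N) = Im (Cmult (Cconj (c n)) (conv_P N c n)).
Proof.
  intros Hn. unfold triad. rewrite (P_in N c n Hn).
  rewrite (lsum_ext _ (fun m => fst (c n) * Im (Cmult (P N c m) (P N c (n - m)%Z))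
                               - snd (c n) * Re (Cmult (P N c m) (P N c (n - m)%Z)))).
  - rewrite lsum_minus, !lsum_scal. unfold conv_P, Im, Re, Cconj, Cmult. simpl. ring.
  - intros m _. unfold Im, Re, Cconj, Cmult. simpl. ring.
Qed.

Lemma flux_eq_tail N c : real_state c ->
  flux N c = lsum (fun n => IZR n * Im (Cmult (Cconj (c n)) (Cminus (conv c n) (conv_P N c n)))) (Zball N).
Proof.
  intros Hr.
  rewrite <- (Rplus_0_l (lsum _ _)), <- (sum_triad_eq0 (P N c) N (P_real N c Hr) (P_out N c)), <- lsum_plus.
  apply lsum_ext; intros n Hn. apply In_Zball in Hn. rewrite lsum_triad_P by exact Hn.
  destruct (c n), (conv c n), (conv_P N c n).
  unfold Im, Cconj, Cmult, Cminus, Cplus, Copp; simpl. ring.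
Qed.

Lemma Rabs_Im_conj_mul_le (a e : C) E : Rabs (Re e) <= E -> Rabs (Im e) <= E ->
  Rabs (Im (Cmult (Cconj a) e)) <= 2 * E * Cmod a.
Proof.
  intros H1 H2. pose proof (re_le_Cmod a). pose proof (im_le_Cmod a).
  replace (Im (Cmult (Cconj a) e)) with (Re a * Im e - Im a * Re e)
    by (destruct a, e; unfold Im, Re, Cconj, Cmult; simpl; ring).
  eapply Rle_trans; [apply Rabs_triang|]. rewrite Rabs_Ropp, !Rabs_mult.
  pose proof (Rabs_pos (Re a)). pose proof (Rabs_pos (Im a)). pose proof (Rabs_pos (Re e)). nra.
Qed.

Lemma flux_bound c B K : real_state c -> in_H2 c -> H2_norm_sq c <= B ->
  Rabs (flux (S K) c) <= (1 + B) * (B + inv_sq_weight_sum) ^ 2 / (2 * INR (S K)).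
Proof.
  intros Hr Hc HB. set (N := S K). set (W := inv_sq_weight_sum).
  assert (HN : 0 < INR N) by apply lt_0_INR, Nat.lt_0_succ.
  set (E := (1 + B) / INR N * (/ 2 * (B + W))).
  assert (HE : 0 <= E).
  { pose proof (H2_norm_sq_nonneg c Hc). pose proof inv_sq_weight_sum_nonneg.
    unfold E, W. apply Rmult_le_pos; [apply Rdiv_le_0_compat|]; lra. }
  rewrite flux_eq_tail by exact Hr. eapply Rle_trans; [apply Rabs_lsum_le|].
  eapply Rle_trans; [apply (lsum_le _ (fun n => 2 * E * wcoef c n))|].
  - intros n _. rewrite Rabs_mult.
    pose proof (Rabs_Im_conj_mul_le (c n) (Cminus (conv c n) (conv_P N c n)) E
      (conv_P_error c B Hc HB Re K n re_le_Cmod) (conv_P_error c B Hc HB Im K n im_le_Cmod)).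
    pose proof (Rabs_pos (IZR n)). pose proof (Cmod_ge_0 (c n)).
    pose proof (Rabs_pos (Im (Cmult (Cconj (c n)) (Cminus (conv c n) (conv_P N c n))))).
    unfold wcoef. nra.
  - rewrite lsum_scal. eapply Rle_trans.
    + apply Rmult_le_compat_l; [lra|]. eapply Rle_trans.
      * apply lsum_le_sumZ; [apply summableZ_wcoef, Hc | apply wcoef_nonneg].
      * apply (sumZ_wcoef_le c B Hc HB).
    + apply Req_le. unfold E, W. field. lra.
Qed.

(** * Conservation of the mean and of the L^2 norm *)

Lemma is_derive_linear {V W : NormedModule R_AbsRing} (g : V -> W) (f : R -> V) x l :
  is_linear g -> is_derive f x l -> is_derive (fun s => g (f s)) x (g l).
Proof.
  intros Hg Hf. unfold is_derive in *. eapply filterdiff_ext_lin.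
  - apply (filterdiff_comp' f g x _ g Hf), filterdiff_linear, Hg.
  - intros y. apply (linear_scal g Hg).
Qed.

Lemma is_linear_Cmult (p : C) : is_linear (U := C_R_NormedModule) (V := C_R_NormedModule) (Cmult p).
Proof.
  apply Build_is_linear.
  - intros x y. apply Cmult_plus_distr_l.
  - intros k [x y]. destruct p as [a b]. unfold scal; simpl. unfold prod_scal, Cmult, scal; simpl.
    unfold mult; simpl. f_equal; ring.
  - exists (Cmod p + 1). split; [pose proof (Cmod_ge_0 p); lra|].
    intros x. rewrite <- !Cmod_norm, Cmod_mult. pose proof (Cmod_ge_0 x). nra.
Qed.

Lemma is_derive_sq (f : R -> R) x l : is_derive f x l -> is_derive (fun s => f s ^ 2) x (2 * f x * l).
Proof.
  intros Hf. eapply is_derive_ext; [intros; reflexivity|].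
  replace (2 * f x * l) with (INR 2 * l * f x ^ Nat.pred 2) by (simpl; ring).
  now apply is_derive_pow.
Qed.

Lemma is_derive_lsum {A : Type} (g : A -> R -> R) (dg : A -> R) l x :
  (forall n, In n l -> is_derive (g n) x (dg n)) ->
  is_derive (fun s => lsum (fun n => g n s) l) x (lsum dg l).
Proof.
  induction l as [|a l IH]; simpl; intros H; [apply (is_derive_const 0 x)|].
  apply (is_derive_plus (g a) (fun s => lsum (fun n => g n s) l)); auto.
Qed.

Lemma continuity_pt_lsum {A : Type} (g : A -> R -> R) l x :
  (forall n, In n l -> continuity_pt (g n) x) -> continuity_pt (fun s => lsum (fun n => g n s) l) x.
Proof.
  induction l as [|a l IH]; simpl; intros H.
  - apply continuity_pt_const. intros ? ?; reflexivity.
  - apply (continuity_pt_plus (g a) (fun s => lsum (fun n => g n s) l)); auto.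
Qed.

Lemma const_of_derive_zero (f : R -> R) t : 0 <= t ->
  (forall x, 0 < x < t -> is_derive f x 0) -> (forall x, 0 <= x <= t -> continuity_pt f x) ->
  f t = f 0.
Proof.
  intros Ht Hd Hc. destruct (MVT_gen f 0 t (fun _ => 0)) as [xi [_ E]].
  - intros x Hx. apply Hd. rewrite Rmin_left, Rmax_right in Hx; lra.
  - intros x Hx. apply Hc. rewrite Rmin_left, Rmax_right in Hx; lra.
  - lra.
Qed.

Lemma locally_constant_nonneg (f : R -> R) :
  (forall s, 0 <= s -> exists d, 0 < d /\ forall r, 0 <= r -> Rabs (r - s) < d -> f r = f s) ->
  forall t, 0 <= t -> f t = f 0.
Proof.
  intros Hf t Ht. set (g := fun x => f (Rmax 0 x)).
  assert (Hloc : forall x, locally x (fun y => g y = g x)).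
  { intros x. destruct (Rle_lt_dec 0 x) as [Hx | Hx].
    - destruct (Hf x Hx) as [d [Hd Hr]]. exists (mkposreal d Hd). intros y Hy.
      unfold g. rewrite (Rmax_right 0 x) by exact Hx. apply Hr; [apply Rmax_l|].
      apply Rle_lt_trans with (Rabs (y - x)); [| exact Hy].
      unfold Rmax; destruct Rle_dec; unfold Rabs; repeat destruct Rcase_abs; lra.
    - exists (mkposreal (- x) ltac:(simpl; lra)). intros y Hy.
      unfold ball in Hy; simpl in Hy; unfold AbsRing_ball, abs, minus, plus, opp in Hy; simpl in Hy.
      apply Rabs_def2 in Hy. unfold g. rewrite !Rmax_left by lra. reflexivity. }
  assert (Hd : forall x, is_derive g x 0).
  { intros x. apply (is_derive_ext_loc (fun _ => g x)); [| apply (is_derive_const (g x) x)].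
    eapply filter_imp; [| apply Hloc]. intros y Hy. now rewrite Hy. }
  replace (f t) with (g t) by (unfold g; now rewrite Rmax_right).
  replace (f 0) with (g 0) by (unfold g; now rewrite Rmax_right by lra).
  apply const_of_derive_zero; auto.
  intros x _. apply derivable_continuous_pt. exists 0. apply is_derive_Reals, Hd.
Qed.

Lemma is_lim_seq_le_inv_eq0 (a : nat -> R) (l M : R) :
  (forall K, Rabs (a K) <= M / INR (S K)) -> is_lim_seq a l -> l = 0.
Proof.
  intros Ha Hl.
  assert (Hinv : is_lim_seq (fun K => M / INR (S K)) 0).
  { replace (Finite 0) with (Rbar_mult M 0) by (simpl; f_equal; ring).
    apply is_lim_seq_scal_l. replace (Finite 0) with (Rbar_inv p_infty) by reflexivity.
    apply is_lim_seq_inv; [| discriminate].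
    eapply is_lim_seq_ext; [intros n; symmetry; apply S_INR|].
    eapply is_lim_seq_plus; [apply is_lim_seq_INR | apply is_lim_seq_const | reflexivity]. }
  assert (Hinv' : is_lim_seq (fun K => - (M / INR (S K))) 0).
  { replace (Finite 0) with (Rbar_opp 0) by (simpl; f_equal; ring). now apply -> is_lim_seq_opp. }
  assert (H0 : is_lim_seq a 0).
  { apply (is_lim_seq_le_le _ _ _ _ (fun K => proj1 (Rabs_le_between _ _) (Ha K)) Hinv' Hinv). }
  apply is_lim_seq_unique in Hl. apply is_lim_seq_unique in H0. rewrite Hl in H0.
  now apply (f_equal real) in H0.
Qed.

Definition l2_norm_sq (c : state) : R := sumZ (fun n => Cmod (c n) ^ 2).

Lemma kdv_rhs_mode0 L delta c : kdv_rhs L delta c 0 = 0%C.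
Proof. unfold kdv_rhs, Cmult, Cplus; simpl. apply injective_projections; simpl; unfold Rdiv; ring. Qed.

(* The dispersive term is skew: it drops out of the energy balance. *)
Lemma energy_rate L delta c n : L <> 0 ->
  2 * Re (c n) * Re (kdv_rhs L delta c n) + 2 * Im (c n) * Im (kdv_rhs L delta c n)
  = 2 * PI / L * (IZR n * Im (Cmult (Cconj (c n)) (conv c n))).
Proof. intros HL. unfold kdv_rhs, Re, Im, Cconj, Cmult, Cplus; simpl. field. exact HL. Qed.

Section Conservation.
Variables (L delta : R) (u : R -> state).
Hypotheses (hL : 0 < L) (hu : is_kdv_solution L delta u).

(* Extending [u] to negative times by [u 0] makes the coefficients continuous at [t = 0] in the
   two-sided sense required by the mean value theorem. *)
Let v (t : R) : state := u (Rmax 0 t).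

Lemma v_real_H2 t : real_state (v t) /\ in_H2 (v t).
Proof. apply hu, Rmax_l. Qed.

Lemma v_H2_continuous t eps : 0 < eps ->
  exists d, 0 < d /\ forall s, Rabs (s - t) < d -> H2_norm_sq (state_sub (v s) (v t)) < eps.
Proof.
  intros Heps. destruct (proj1 (proj2 hu) (Rmax 0 t) (Rmax_l _ _) eps Heps) as [d [Hd Hc]].
  exists d; split; [exact Hd|]. intros s Hs. apply Hc; [apply Rmax_l|].
  apply Rle_lt_trans with (Rabs (s - t)); [| exact Hs].
  unfold Rmax; destruct Rle_dec, Rle_dec; unfold Rabs; repeat destruct Rcase_abs; lra.
Qed.

Lemma v_coef_derive n t : 0 < t -> is_derive (fun s => v s n) t (kdv_rhs L delta (v t) n).
Proof.
  intros Ht. unfold v. rewrite (Rmax_right 0 t) by lra.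
  eapply is_derive_ext_loc; [| apply (proj2 (proj2 hu) n t Ht)].
  exists (mkposreal t Ht). intros y Hy. simpl. rewrite Rmax_right; [reflexivity|].
  unfold ball in Hy; simpl in Hy; unfold AbsRing_ball, abs, minus, plus, opp in Hy; simpl in Hy.
  apply Rabs_def2 in Hy. lra.
Qed.

Lemma v_coef_continuous n t : continuity_pt (fun s => Re (v s n)) t /\ continuity_pt (fun s => Im (v s n)) t.
Proof.
  assert (Hc : forall eps, 0 < eps -> exists d, 0 < d /\ forall s, Rabs (s - t) < d ->
            Cmod (Cminus (v s n) (v t n)) < eps).
  { intros eps Heps. destruct (v_H2_continuous t (eps ^ 2) ltac:(nra)) as [d [Hd Hs]].
    exists d; split; [exact Hd|]. intros s Hst. specialize (Hs s Hst).
    pose proof (Cmod_sq_le_H2 _ n (in_H2_sub _ _ (proj2 (v_real_H2 s)) (proj2 (v_real_H2 t)))).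
    pose proof (Cmod_ge_0 (Cminus (v s n) (v t n))).
    destruct (Rlt_le_dec (Cmod (Cminus (v s n) (v t n))) eps) as [|Hge]; [assumption|].
    exfalso. assert (eps ^ 2 <= Cmod (Cminus (v s n) (v t n)) ^ 2) by (apply pow_incr; lra).
    unfold state_sub in *. lra. }
  split; intros eps Heps; destruct (Hc eps Heps) as [d [Hd Hs]]; exists d; split; auto;
    intros y [_ Hy]; simpl; unfold R_dist in *; eapply Rle_lt_trans; try apply (Hs y Hy);
    [apply (re_le_Cmod (Cminus (v y n) (v t n))) | apply (im_le_Cmod (Cminus (v y n) (v t n)))].
Qed.

Let partial_energy (N : nat) (s : R) : R := lsum (fun n => Re (v s n) ^ 2 + Im (v s n) ^ 2) (Zball N).

Lemma partial_energy_continuous N x : continuity_pt (partial_energy N) x.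
Proof.
  apply (continuity_pt_lsum (fun n s => Re (v s n) ^ 2 + Im (v s n) ^ 2)). intros n _.
  destruct (v_coef_continuous n x) as [Hre Him].
  apply (continuity_pt_plus (fun s => Re (v s n) ^ 2) (fun s => Im (v s n) ^ 2)).
  - apply (continuity_pt_ext (fun s => Re (v s n) * Re (v s n))); [intros; simpl; ring|].
    now apply continuity_pt_mult.
  - apply (continuity_pt_ext (fun s => Im (v s n) * Im (v s n))); [intros; simpl; ring|].
    now apply continuity_pt_mult.
Qed.

Lemma partial_energy_derive N x : 0 < x ->
  is_derive (partial_energy N) x (2 * PI / L * flux N (v x)).
Proof.
  intros Hx. unfold flux. rewrite <- lsum_scal.
  rewrite (lsum_ext _ (fun n => 2 * Re (v x n) * Re (kdv_rhs L delta (v x) n)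
                              + 2 * Im (v x n) * Im (kdv_rhs L delta (v x) n)))
    by (intros; symmetry; apply energy_rate; lra).
  apply (is_derive_lsum (fun n s => Re (v s n) ^ 2 + Im (v s n) ^ 2)). intros n _.
  pose proof (v_coef_derive n x Hx) as Hd.
  apply (is_derive_plus (fun s => Re (v s n) ^ 2) (fun s => Im (v s n) ^ 2)); apply is_derive_sq.
  - exact (is_derive_linear (fun z : C => fst z) _ x _ is_linear_fst Hd).
  - exact (is_derive_linear (fun z : C => snd z) _ x _ is_linear_snd Hd).
Qed.
Lemma partial_energy_increment_le s r B K : 0 <= s -> 0 <= r ->
  (forall x, Rabs (x - s) <= Rabs (r - s) -> H2_norm_sq (v x) <= B) ->
  Rabs (partial_energy (S K) r - partial_energy (S K) s)
    <= 2 * PI / L * Rabs (r - s) * ((1 + B) * (B + inv_sq_weight_sum) ^ 2 / 2) / INR (S K).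
Proof.
  intros Hs Hr HB.
  assert (Hk : 0 < 2 * PI / L) by (apply Rdiv_lt_0_compat; [pose proof PI_RGT_0 |]; lra).
  assert (HK : 0 < INR (S K)) by apply lt_0_INR, Nat.lt_0_succ.
  destruct (MVT_gen (partial_energy (S K)) s r (fun x => 2 * PI / L * flux (S K) (v x))) as [xi [Hxi ->]].
  - intros x Hx. apply partial_energy_derive.
    unfold Rmin in Hx; destruct Rle_dec in Hx; lra.
  - intros x _. apply partial_energy_continuous.
  - assert (Hxs : Rabs (xi - s) <= Rabs (r - s)).
    { unfold Rmin, Rmax in Hxi; destruct Rle_dec in Hxi; unfold Rabs; repeat destruct Rcase_abs; lra. }
    pose proof (flux_bound (v xi) B K (proj1 (v_real_H2 xi)) (proj2 (v_real_H2 xi)) (HB xi Hxs)).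
    rewrite !Rabs_mult, (Rabs_right (2 * PI / L)) by lra.
    replace (2 * PI / L * Rabs (r - s) * ((1 + B) * (B + inv_sq_weight_sum) ^ 2 / 2) / INR (S K))
      with (2 * PI / L * ((1 + B) * (B + inv_sq_weight_sum) ^ 2 / (2 * INR (S K))) * Rabs (r - s))
      by (field; lra).
    apply Rmult_le_compat_r; [apply Rabs_pos|]. apply Rmult_le_compat_l; lra.
Qed.

Lemma l2_norm_sq_locally_constant s : 0 <= s ->
  exists d, 0 < d /\ forall r, 0 <= r -> Rabs (r - s) < d -> l2_norm_sq (v r) = l2_norm_sq (v s).
Proof.
  intros Hs. destruct (v_H2_continuous s 1 Rlt_0_1) as [d [Hd Hc]].
  set (B := 2 + 2 * H2_norm_sq (v s)).
  exists d; split; [exact Hd|]. intros r Hr Hrs.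
  assert (HB : forall x, Rabs (x - s) <= Rabs (r - s) -> H2_norm_sq (v x) <= B).
  { intros x Hx. pose proof (Hc x ltac:(lra)).
    pose proof (H2_norm_sq_le_sub (v x) (v s) (proj2 (v_real_H2 x)) (proj2 (v_real_H2 s))).
    unfold B. lra. }
  assert (Hlim : forall t, is_lim_seq (fun K => partial_energy (S K) t) (l2_norm_sq (v t))).
  { intros t. eapply is_lim_seq_ext; [| apply is_lim_seq_sumZ, summableZ_Cmod_sq, (proj2 (v_real_H2 t))].
    intros K. apply lsum_ext. intros n _. apply Cmod2_alt. }
  apply Rminus_diag_uniq. eapply is_lim_seq_le_inv_eq0.
  - intros K. apply (partial_energy_increment_le s r B K Hs Hr HB).
  - apply is_lim_seq_minus'; apply Hlim.
Qed.

Lemma l2_norm_sq_conserved t : 0 <= t -> l2_norm_sq (u t) = l2_norm_sq (u 0).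
Proof.
  intros Ht. replace (u t) with (v t) by (unfold v; now rewrite Rmax_right).
  replace (u 0) with (v 0) by (unfold v; now rewrite Rmax_left by lra).
  exact (locally_constant_nonneg (fun t => l2_norm_sq (v t)) l2_norm_sq_locally_constant t Ht).
Qed.

Lemma mean_conserved t : 0 <= t -> u t 0%Z = u 0 0%Z.
Proof.
  intros Ht. replace (u t) with (v t) by (unfold v; now rewrite Rmax_right).
  replace (u 0) with (v 0) by (unfold v; now rewrite Rmax_left by lra).
  assert (Hd : forall x, 0 < x -> is_derive (fun s => v s 0%Z) x (RtoC 0)).
  { intros x Hx. rewrite <- (kdv_rhs_mode0 L delta (v x)). now apply v_coef_derive. }
  apply injective_projections.
  - apply (const_of_derive_zero (fun s => Re (v s 0%Z))); auto; intros x Hx.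
    + exact (is_derive_linear (fun z : C => fst z) _ x _ is_linear_fst (Hd x (proj1 Hx))).
    + apply v_coef_continuous.
  - apply (const_of_derive_zero (fun s => Im (v s 0%Z))); auto; intros x Hx.
    + exact (is_derive_linear (fun z : C => snd z) _ x _ is_linear_snd (Hd x (proj1 Hx))).
    + apply v_coef_continuous.
Qed.

End Conservation.

(** * Translation symmetry *)

Definition phase (al : R) (n : Z) : C := (cos (al * IZR n), sin (al * IZR n)).

(* [translate al c] is the Fourier series of [x |-> u (x + al L / (2 PI))] when [c] is that of [u]. *)
Definition translate (al : R) (c : state) : state := fun n => Cmult (phase al n) (c n).

Lemma phase_sub al n m : Cmult (phase al m) (phase al (n - m)%Z) = phase al n.
Proof.
  unfold phase. rewrite minus_IZR.
  replace (al * IZR n) with (al * IZR m + al * (IZR n - IZR m)) by ring.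
  rewrite cos_plus, sin_plus. apply injective_projections; simpl; ring.
Qed.

Lemma Cmod_phase al n : Cmod (phase al n) = 1.
Proof.
  unfold Cmod, phase; cbn [fst snd].
  replace (cos (al * IZR n) ^ 2 + sin (al * IZR n) ^ 2) with 1; [apply sqrt_1|].
  pose proof (sin2_cos2 (al * IZR n)). unfold Rsqr in *. simpl. lra.
Qed.

Lemma translate_real al c : real_state c -> real_state (translate al c).
Proof.
  intros Hc n. unfold translate. rewrite Hc. unfold phase. rewrite opp_IZR.
  replace (al * - IZR n) with (- (al * IZR n)) by ring. rewrite cos_neg, sin_neg.
  destruct (c n). apply injective_projections; simpl; ring.
Qed.

Lemma Cmod_translate al c n : Cmod (translate al c n) = Cmod (c n).
Proof. unfold translate. rewrite Cmod_mult, Cmod_phase. ring. Qed.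

Lemma in_H2_translate al c : in_H2 c -> in_H2 (translate al c).
Proof.
  intros Hc. apply (summableZ_le _ _ Hc). intros n.
  rewrite Cmod_translate, Rabs_right by apply Rle_ge, H2_term_nonneg. lra.
Qed.

Lemma H2_norm_sq_translate al c : H2_norm_sq (translate al c) = H2_norm_sq c.
Proof. apply sumZ_ext. intros n. now rewrite Cmod_translate. Qed.

Lemma translate_sub al a b : state_sub (translate al a) (translate al b) = translate al (state_sub a b).
Proof.
  apply functional_extensionality. intros n. unfold translate, state_sub.
  destruct (phase al n), (a n), (b n). apply injective_projections; simpl; ring.
Qed.

Lemma conv_translate al c n : in_H2 c -> conv (translate al c) n = Cmult (phase al n) (conv c n).
Proof.
  intros Hc. set (z := fun m => Cmult (c m) (c (n - m)%Z)).
  assert (Hre := summableZ_conv_term c _ Hc (Rle_refl _) Re n (re_le_Cmod)).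
  assert (Him := summableZ_conv_term c _ Hc (Rle_refl _) Im n (im_le_Cmod)).
  assert (Hz : forall m, Cmult (translate al c m) (translate al c (n - m)%Z) = Cmult (phase al n) (z m)).
  { intros m. unfold translate, z. rewrite <- (phase_sub al n m).
    destruct (phase al m), (phase al (n - m)%Z), (c m), (c (n - m)%Z).
    apply injective_projections; simpl; ring. }
  assert (Hre_eq : sumZ (fun m => Re (Cmult (translate al c m) (translate al c (n - m)%Z)))
                   = fst (phase al n) * sumZ (fun m => Re (z m))
                     - snd (phase al n) * sumZ (fun m => Im (z m))).
  { rewrite <- !sumZ_scal, <- sumZ_minus by (apply summableZ_scal; assumption).
    apply sumZ_ext. intros m. rewrite Hz. destruct (phase al n), (z m). unfold Re, Im; simpl. ring. }
  assert (Him_eq : sumZ (fun m => Im (Cmult (translate al c m) (translate al c (n - m)%Z)))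
                   = fst (phase al n) * sumZ (fun m => Im (z m))
                     + snd (phase al n) * sumZ (fun m => Re (z m))).
  { rewrite <- !sumZ_scal, <- sumZ_plus by (apply summableZ_scal; assumption).
    apply sumZ_ext. intros m. rewrite Hz. destruct (phase al n), (z m). unfold Re, Im; simpl. ring. }
  unfold conv. rewrite Hre_eq, Him_eq. reflexivity.
Qed.

Lemma kdv_rhs_translate L delta al c n : in_H2 c ->
  kdv_rhs L delta (translate al c) n = Cmult (phase al n) (kdv_rhs L delta c n).
Proof.
  intros Hc. unfold kdv_rhs. rewrite conv_translate by exact Hc. unfold translate.
  destruct (phase al n), (conv c n), (c n). apply injective_projections; simpl; ring.
Qed.

Lemma translate_solution L delta al u :
  is_kdv_solution L delta u -> is_kdv_solution L delta (fun t => translate al (u t)).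
Proof.
  intros [H1 [H2 H3]]. split; [|split].
  - intros t Ht. destruct (H1 t Ht) as [Hr Hh]. split; [apply translate_real, Hr | apply in_H2_translate, Hh].
  - intros t Ht eps Heps. destruct (H2 t Ht eps Heps) as [d [Hd Hc]]. exists d; split; [exact Hd|].
    intros s Hs Hst. rewrite translate_sub, H2_norm_sq_translate. now apply Hc.
  - intros n t Ht. rewrite kdv_rhs_translate by (apply H1; lra).
    exact (is_derive_linear (Cmult (phase al n)) (fun s => u s n) t _ (is_linear_Cmult _) (H3 n t Ht)).
Qed.

(** * The counterexample *)

Definition zero_state : state := fun _ => 0%C.

Lemma H2_norm_sq_zero : H2_norm_sq zero_state = 0.
Proof. rewrite <- sumZ_zero. apply sumZ_ext. intros n. unfold zero_state. rewrite Cmod_0. ring. Qed.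

Lemma l2_norm_sq_zero : l2_norm_sq zero_state = 0.
Proof. rewrite <- sumZ_zero. apply sumZ_ext. intros n. unfold zero_state. rewrite Cmod_0. ring. Qed.

Lemma in_H2_zero : in_H2 zero_state.
Proof.
  apply (summableZ_le _ _ summableZ_zero). intros n.
  unfold zero_state. rewrite Cmod_0. simpl. rewrite !Rmult_0_l, Rmult_0_r, Rabs_R0. lra.
Qed.

Lemma state_sub_zero c : state_sub c zero_state = c.
Proof.
  apply functional_extensionality. intros n. unfold state_sub, zero_state.
  apply injective_projections; simpl; ring.
Qed.

Lemma kdv_rhs_zero L delta n : kdv_rhs L delta zero_state n = 0%C.
Proof.
  unfold kdv_rhs, conv, zero_state.
  rewrite (sumZ_ext (fun m => Re _) (fun _ => 0)), (sumZ_ext (fun m => Im _) (fun _ => 0)), sumZ_zero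
    by (intros; unfold Re, Im; simpl; ring).
  apply injective_projections; simpl; ring.
Qed.

Lemma zero_solution L delta : is_kdv_solution L delta (fun _ => zero_state).
Proof.
  split; [|split].
  - intros t _. split; [| apply in_H2_zero].
    intros n. unfold zero_state. apply injective_projections; simpl; ring.
  - intros t _ eps Heps. exists 1. split; [lra|]. intros s _ _.
    now rewrite state_sub_zero, H2_norm_sq_zero.
  - intros n t _. rewrite kdv_rhs_zero.
    apply (@is_derive_const R_AbsRing (prod_NormedModule R_AbsRing R_NormedModule R_NormedModule)).
Qed.

Lemma admissible_zero : admissible_data zero_state.
Proof.
  split; [|split; [reflexivity | apply in_H2_zero]].
  intros n. unfold zero_state. apply injective_projections; simpl; ring.
Qed.

Definition single_mode (N : nat) : state :=
  fun n => if Z.eq_dec (Z.abs n) (Z.of_nat N) then 1%C else 0%C.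

Lemma admissible_single_mode N : (0 < N)%nat -> admissible_data (single_mode N).
Proof.
  intros HN. unfold single_mode. split; [|split].
  - intros n. rewrite Z.abs_opp. destruct Z.eq_dec; apply injective_projections; simpl; ring.
  - unfold mean_zero. destruct Z.eq_dec; [simpl in *; lia | reflexivity].
  - apply (sumZ_finite _ N). intros j Hj. destruct Z.eq_dec; [lia|]. rewrite Cmod_0. ring.
Qed.

Lemma l2_norm_sq_single_mode_pos N : 0 < l2_norm_sq (single_mode N).
Proof.
  assert (Hs : summableZ (fun n => Cmod (single_mode N n) ^ 2)).
  { apply (sumZ_finite _ N). intros j Hj. unfold single_mode.
    destruct Z.eq_dec; [lia|]. rewrite Cmod_0. ring. }
  eapply Rlt_le_trans; [| apply (term_le_sumZ _ (Z.of_nat N) Hs); intros; apply pow2_ge_0].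
  unfold single_mode. destruct Z.eq_dec as [_ | Hne]; [rewrite Cmod_1; lra | lia].
Qed.

Lemma translate_single_mode N : (0 < N)%nat -> translate (2 * PI / INR N) (single_mode N) = single_mode N.
Proof.
  intros HN. assert (HN' : 0 < INR N) by now apply lt_0_INR.
  apply functional_extensionality. intros n. unfold translate, single_mode.
  destruct Z.eq_dec as [Hn | Hn]; [| apply injective_projections; simpl; ring].
  replace (phase (2 * PI / INR N) n) with (RtoC 1); [apply injective_projections; simpl; ring|].
  assert (Hn' : IZR n = INR N \/ IZR n = - INR N).
  { rewrite INR_IZR_INZ, <- Hn.
    destruct (Z.abs_spec n) as [[_ ->] | [_ ->]]; [left | right; rewrite opp_IZR]; ring. }
  unfold phase. destruct Hn' as [-> | ->].
  - replace (2 * PI / INR N * INR N) with (2 * PI) by (field; lra).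
    rewrite cos_2PI, sin_2PI. reflexivity.
  - replace (2 * PI / INR N * - INR N) with (- (2 * PI)) by (field; lra).
    rewrite cos_neg, sin_neg, cos_2PI, sin_2PI. apply injective_projections; simpl; ring.
Qed.


Lemma fixed_by_mult_eq0 (p z : C) : p <> 1%C -> Cmult p z = z -> z = 0%C.
Proof.
  intros Hp Hz. assert (Hp1 : Cminus p 1 <> 0%C).
  { intros E. apply Hp. replace p with (Cplus (Cminus p 1) 1) by ring. rewrite E. ring. }
  replace z with (Cmult (Cinv (Cminus p 1)) (Cminus (Cmult p z) z)) by (field; exact Hp1).
  rewrite Hz. ring.
Qed.

Lemma cos_ne1 (N : nat) n : (0 < Z.abs n < Z.of_nat N)%Z -> cos (2 * PI / INR N * IZR n) <> 1.
Proof.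
  intros Hn Hc. assert (HN : 0 < INR N) by (apply lt_0_INR; lia).
  set (x := 2 * PI / INR N * IZR n) in *.
  assert (Hs : sin x = 0) by (pose proof (sin2_cos2 x) as H; rewrite Hc in H; unfold Rsqr in H; nra).
  apply sin_eq_0_0 in Hs as [k Hk].
  assert (E : IZR (2 * n) = IZR (k * Z.of_nat N)).
  { rewrite !mult_IZR, <- INR_IZR_INZ. apply Rmult_eq_reg_l with (PI / INR N).
    2: { apply Rgt_not_eq, Rdiv_lt_0_compat; [apply PI_RGT_0 | lra]. }
    replace (PI / INR N * (IZR 2 * IZR n)) with x by (unfold x; field; lra).
    rewrite Hk. field. lra. }
  apply eq_IZR in E. assert (Hk1 : k = 1%Z \/ k = (-1)%Z) by nia.
  rewrite Hk in Hc. destruct Hk1 as [-> | ->]; simpl in Hc.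
  - rewrite Rmult_1_l, cos_PI in Hc. lra.
  - replace (-1 * PI) with (- PI) in Hc by ring. rewrite cos_neg, cos_PI in Hc. lra.
Qed.

Lemma translation_invariant_mode_eq0 N (c : state) n : (0 < Z.abs n < Z.of_nat N)%Z ->
  translate (2 * PI / INR N) c = c -> c n = 0%C.
Proof.
  intros Hn Hc. apply (fixed_by_mult_eq0 (phase (2 * PI / INR N) n)).
  - intros E. apply (cos_ne1 N n Hn). exact (f_equal fst E).
  - exact (f_equal (fun c => c n) Hc).
Qed.

Lemma low_modes_vanish L delta M u : is_kdv_solution L delta u -> u 0 = single_mode (S M) ->
  (forall t, 0 <= t -> translate (2 * PI / INR (S M)) (u t) = u t) ->
  forall t, 0 <= t -> P M (u t) = zero_state.
Proof.
  intros Hu Hu0 Hinv t Ht. apply functional_extensionality. intros n. unfold P.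
  destruct (Z.leb_spec (Z.abs n) (Z.of_nat M)); [| reflexivity].
  destruct (Z.eq_dec n 0) as [-> | Hn0].
  - rewrite (mean_conserved _ _ _ Hu t Ht), Hu0. reflexivity.
  - apply (translation_invariant_mode_eq0 (S M)); [lia | now apply Hinv].
Qed.

Lemma is_lim_pinfty_eventually_const (f : R -> R) (a l : R) :
  (forall t, 0 <= t -> f t = a) -> is_lim f p_infty l -> l = a.
Proof.
  intros Hf Hl. assert (Ha : is_lim f p_infty a).
  { apply (is_lim_ext_loc (fun _ => a)); [| apply is_lim_const].
    exists 0. intros t Ht. symmetry. apply Hf. lra. }
  apply is_lim_unique in Hl, Ha. rewrite Hl in Ha. now apply (f_equal real) in Ha.
Qed.

Theorem theorem3p7 (L delta : R) (hL : 0 < L)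
  (hwp : globally_well_posed L delta) :
  ~ (exists M : nat, (0 < M)%nat /\ determining_modes L delta M).
Proof.
  intros [M [_ Hdm]]. set (N := S M). set (al := 2 * PI / INR N).
  assert (HN : (0 < N)%nat) by apply Nat.lt_0_succ.
  destruct (hwp (single_mode N) (admissible_single_mode N HN)) as [[u [Hu Hu0]] Huniq].
  assert (Hinv : forall t, 0 <= t -> translate al (u t) = u t).
  { intros t Ht. symmetry.
    apply (Huniq u (fun t => translate al (u t)) Hu (translate_solution _ _ al u Hu) Hu0); auto.
    rewrite Hu0. now apply translate_single_mode. }
  assert (Hlow : forall t, 0 <= t -> P M (state_sub (u t) zero_state) = zero_state)
    by (intros t Ht; rewrite state_sub_zero; now apply (low_modes_vanish L delta M u)).
  assert (Hlim : is_lim (fun t => L2_norm L (state_sub (u t) zero_state)) p_infty 0).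
  { apply Hdm; [exact Hu | apply zero_solution | rewrite Hu0; now apply admissible_single_mode
               | apply admissible_zero |].
    apply (is_lim_ext_loc (fun _ => 0)); [| apply is_lim_const].
    exists 0. intros t Ht. unfold L2_norm. fold (l2_norm_sq (P M (state_sub (u t) zero_state))).
    rewrite Hlow, l2_norm_sq_zero, Rmult_0_r, sqrt_0 by lra. reflexivity. }
  apply is_lim_pinfty_eventually_const with (a := sqrt (L * l2_norm_sq (single_mode N))) in Hlim.
  - pose proof (l2_norm_sq_single_mode_pos N).
    pose proof (sqrt_lt_R0 (L * l2_norm_sq (single_mode N)) ltac:(nra)). lra.
  - intros t Ht. unfold L2_norm. rewrite state_sub_zero, <- Hu0.
    fold (l2_norm_sq (u t)). now rewrite (l2_norm_sq_conserved _ _ _ hL Hu t Ht).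
Qed.
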